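(* Let $L$ be a non-degenerate real quadratic form on $\mathbb R^s$ and let $v,w\in Con_L$ with $b_L(v,w)\neq0$. Then the oriented distance between the horoballs $Hb_v$ and $Hb_w$ of $\mathcal P_s(L)$ equals $2\sqrt2\,\ln|b_L(v,w)|$, i.e. $$\inf_{Q\in\mathcal P_s(L),\ Q(w)\le1}\sqrt2\,\ln Q(v)=2\sqrt2\,\ln|b_L(v,w)|.$$
   Context: $b_L$ is the symmetric bilinear form with $L(x)=b_L(x,x)$; $Con_L=\{x:L(x)=0\}$. $\mathcal P_s(L)$ is the set of positive definite quadratic forms $Q$ on $\mathbb R^s$ such that in some basis $Q$ has matrix $\mathrm{Id}_s$ and $L$ has matrix $\mathrm{diag}(1,\dots,1,-1,\dots,-1)$. For nonzero $v\in Con_L$, $f_v(Q)=\sqrt2\ln Q(v)$ is a Busemann function on $\mathcal P_s(L)$ and $Hb_v=\{Q\in\mathcal P_s(L):f_v(Q)\le0\}$; the oriented distance from $Hb_v$ to $Hb_w$ is $\inf_{Q\in Hb_w}f_v(Q)$. *)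

From HB Require Import structures.
From mathcomp Require Import all_boot all_order all_algebra.
From mathcomp Require Import all_classical all_reals.
From mathcomp Require Import ereal exp.
Set Implicit Arguments. Unset Strict Implicit. Unset Printing Implicit Defensive.
Import Order.TTheory GRing.Theory Num.Theory.
Local Open Scope ring_scope.

(* A quadratic form on R^s is represented by its symmetric Gram matrix A:
   qf A x = x^T A x, and bf A x y = x^T A y is the associated symmetric
   bilinear form (b_L(x,x) = L(x)). *)
Definition qf (R : realType) (s : nat) (A : 'M[R]_s) (x : 'cV[R]_s) : R :=
  (x^T *m A *m x) 0 0.
Definition bf (R : realType) (s : nat) (A : 'M[R]_s) (x y : 'cV[R]_s) : R :=
  (x^T *m A *m y) 0 0.

Definition symmetric_form (R : realType) (s : nat) (A : 'M[R]_s) : Prop :=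
  A^T = A.

Definition nondeg_qf (R : realType) (s : nat) (A : 'M[R]_s) : Prop :=
  symmetric_form A /\ \det A != 0.

Definition pos_def (R : realType) (s : nat) (Q : 'M[R]_s) : Prop :=
  symmetric_form Q /\ forall x : 'cV[R]_s, x != 0 -> 0 < qf Q x.

Definition Con (R : realType) (s : nat) (L : 'M[R]_s) : set 'cV[R]_s :=
  [set x | qf L x = 0].

(* P_s(L): positive definite Q such that in some basis (columns of the
   invertible change-of-basis matrix P) Q has matrix Id_s and L has matrix
   diag(1,...,1,-1,...,-1) (p ones followed by s-p minus ones). *)
Definition Ps (R : realType) (s : nat) (L : 'M[R]_s) : set 'M[R]_s :=
  [set Q | pos_def Q /\
     exists (p : nat) (P : 'M[R]_s), P \in unitmx /\
       P^T *m Q *m P = 1%:M /\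
       P^T *m L *m P = \matrix_(i < s, j < s)
                         (if i == j then (if (i < p)%N then 1 else -1) else 0)].

From Pilot Require Import Defs.
From HB Require Import structures.
From mathcomp Require Import all_boot all_order all_algebra.
From mathcomp Require Import all_classical all_reals.
From mathcomp Require Import ereal exp.
From mathcomp Require Import fingroup perm.
From mathcomp Require Import ring lra.
Import Order.TTheory GRing.Theory Num.Theory.
Local Open Scope ring_scope.
Local Open Scope classical_set_scope.

(* If Q is in P_s(L), then in a basis where Q = Id and L = diag(1,..,1,-1,..,-1)
   the Cauchy-Schwarz inequality gives b_L(v,w)^2 <= Q(v) Q(w), so Q(w) <= 1
   forces Q(v) >= b_L(v,w)^2.
   Conversely a := v / b_L(v,w) and b := w satisfy L(a) = L(b) = 0 and
   b_L(a,b) = 1, so e+ := (a + b)/sqrt 2 and e- := (a - b)/sqrt 2 are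
   L-orthogonal with L(e+) = 1 and L(e-) = -1. Extending them to a Sylvester
   basis of L (by induction on s, splitting off anisotropic vectors) and
   declaring that basis orthonormal gives Q in P_s(L) with Q(a), Q(b) <= 1,
   that is Q(w) <= 1 and Q(v) = b_L(v,w)^2: the infimum is attained. *)

Section BilinearForm.
Context {R : realType} {n : nat}.
Implicit Types (M : 'M[R]_n) (x y z : 'cV[R]_n).

Lemma qfE M x : qf M x = bf M x x. Proof. by []. Qed.

Lemma bfC {M} : M^T = M -> forall x y, bf M x y = bf M y x.
Proof.
move=> sM x y; rewrite /bf -[in RHS](trmxK (y^T *m M *m x)) [in RHS]mxE.
by rewrite !trmx_mul !trmxK sM mulmxA.
Qed.

Lemma bfDl M x y z : bf M (x + y) z = bf M x z + bf M y z.
Proof. by rewrite /bf linearD /= !mulmxDl mxE. Qed.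

Lemma bfDr M x y z : bf M x (y + z) = bf M x y + bf M x z.
Proof. by rewrite /bf !mulmxDr mxE. Qed.

Lemma bfZl M a x y : bf M (a *: x) y = a * bf M x y.
Proof. by rewrite /bf linearZ /= -!scalemxAl mxE. Qed.

Lemma bfZr M a x y : bf M x (a *: y) = a * bf M x y.
Proof. by rewrite /bf -!scalemxAr mxE. Qed.

Lemma bf0l M y : bf M 0 y = 0.
Proof. by rewrite /bf trmx0 !mul0mx mxE. Qed.

Lemma bf0r M x : bf M x 0 = 0.
Proof. by rewrite /bf !mulmx0 mxE. Qed.

Lemma bf_delta M (i j : 'I_n) : bf M (delta_mx i 0) (delta_mx j 0) = M i j.
Proof. by rewrite /bf trmx_delta -rowE -colE !mxE. Qed.

Lemma qf0 M : qf M 0 = 0. Proof. exact: bf0l. Qed.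

Lemma qfZ M a x : qf M (a *: x) = a ^+ 2 * qf M x.
Proof. by rewrite !qfE bfZl bfZr mulrA expr2. Qed.

Lemma bfNr M x y : bf M x (- y) = - bf M x y.
Proof. by rewrite -scaleN1r bfZr mulN1r. Qed.

Lemma qfN M x : qf M (- x) = qf M x.
Proof. by rewrite -scaleN1r qfZ sqrrN expr1n mul1r. Qed.

Lemma qfD {M} x y : M^T = M -> qf M (x + y) = qf M x + 2 * bf M x y + qf M y.
Proof.
move=> sM; rewrite !qfE !bfDl !bfDr (bfC sM y x).
by rewrite mulr2n mulrDl !mul1r !addrA.
Qed.

Lemma qf_eq0_mx {M} : M^T = M -> (forall x, qf M x = 0) -> M = 0.
Proof.
move=> sM qM0; apply/matrixP => i j; rewrite [RHS]mxE -bf_delta.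
by have := qfD (delta_mx i 0) (delta_mx j 0) sM; rewrite !qM0; lra.
Qed.

Lemma bf_mulmx m M (P : 'M[R]_(n, m)) (x y : 'cV[R]_m) :
  bf M (P *m x) (P *m y) = bf (P^T *m M *m P) x y.
Proof. by rewrite /bf trmx_mul !mulmxA. Qed.

Lemma qf1E x : qf 1%:M x = \sum_i x i 0 ^+ 2.
Proof. by rewrite /qf mulmx1 mxE; apply: eq_bigr => i _; rewrite mxE expr2. Qed.

Lemma qf1_ge0 x : 0 <= qf 1%:M x.
Proof. by rewrite qf1E sumr_ge0 // => i _; rewrite sqr_ge0. Qed.

Lemma qf1_gt0 x : x != 0 -> 0 < qf 1%:M x.
Proof.
move=> x0; rewrite lt_def qf1_ge0 andbT qf1E psumr_eq0 => [|i _]; last exact: sqr_ge0.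
apply: contra x0 => /allP x_eq0; apply/eqP/matrixP => i j; rewrite ord1 mxE.
by have := x_eq0 i (mem_index_enum i); rewrite /= sqrf_eq0 => /eqP.
Qed.

Lemma bf1_sqr_le x y : bf 1%:M x y ^+ 2 <= qf 1%:M x * qf 1%:M y.
Proof.
have [->|x0] := eqVneq x 0; first by rewrite bf0l expr0n mulr_ge0 ?qf1_ge0.
have := qf1_ge0 (qf 1%:M x *: y + (- bf 1%:M x y) *: x).
rewrite qfD ?trmx1 // !qfZ bfZl bfZr (bfC (trmx1 _ _) y x).
have := qf1_gt0 _ x0; nra.
Qed.

Lemma qf1_1 : qf 1%:M (1%:M : 'cV[R]_1) = 1.
Proof. by rewrite /qf trmx1 !mulmx1 mxE. Qed.

Lemma qf_normalize M x : qf M ((Num.sqrt `|qf M x|)^-1 *: x) = Num.sg (qf M x).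
Proof.
rewrite qfZ exprVn sqr_sqrtr // ; have [->|q0] := eqVneq (qf M x) 0.
  by rewrite normr0 invr0 mul0r sgr0.
by rewrite {2}[qf M x]numEsg mulrCA mulVf ?normr_eq0 // mulr1.
Qed.

Lemma orthogonalize_neg {M} x {y} : M^T = M -> y = 0 \/ qf M y = -1 ->
  bf M (x + bf M x y *: y) y = 0 /\
  qf M (x + bf M x y *: y) = qf M x + bf M x y ^+ 2.
Proof.
move=> sM [->|My]; first by rewrite !bf0r scale0r addr0 expr0n addr0.
rewrite bfDl bfZl qfD // bfZr qfZ -qfE My; split; ring.
Qed.

End BilinearForm.

Section BlockForms.
Context {R : realType}.

Lemma bf_block n1 n2 (A : 'M[R]_n1) (D : 'M[R]_n2) (x1 y1 : 'cV[R]_n1)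
    (x2 y2 : 'cV[R]_n2) :
  bf (block_mx A 0 0 D) (col_mx x1 x2) (col_mx y1 y2) = bf A x1 y1 + bf D x2 y2.
Proof.
by rewrite /bf tr_col_mx mul_row_block !mulmx0 ?mul0mx addr0 add0r mul_row_col mxE.
Qed.

Lemma qf1_col n1 n2 (x1 : 'cV[R]_n1) (x2 : 'cV[R]_n2) :
  qf 1%:M (col_mx x1 x2) = qf 1%:M x1 + qf 1%:M x2.
Proof. by rewrite qfE (scalar_mx_block n1 n2) bf_block. Qed.

End BlockForms.

Lemma exists_qf_neq0 {R : realType} {n} {M : 'M[R]_n.+1} :
  M^T = M -> \det M != 0 -> exists x, qf M x != 0.
Proof.
move=> sM dM; apply: contrapT => /forallNP qM0; move: dM.
by rewrite (qf_eq0_mx sM) ?det0 ?eqxx // => x; apply/eqP/negbNE/negP; exact: qM0.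
Qed.

Definition signature_mx (R : realType) n p : 'M[R]_n :=
  \matrix_(i < n, j < n) (if i == j then (if (i < p)%N then 1 else -1) else 0).

Section Signature.
Context {R : realType}.

Lemma tr_signature_mx n p : (signature_mx R n p)^T = signature_mx R n p.
Proof. by apply/matrixP => i j; rewrite !mxE eq_sym; case: eqP => // ->. Qed.

Lemma signature_mxK n p : signature_mx R n p *m signature_mx R n p = 1%:M.
Proof.
apply/matrixP => i j; rewrite !mxE (bigD1 i) //= big1 => [|k /negbTE nki].
  rewrite !mxE eqxx addr0; case: (i == j); last by rewrite mulr0.
  by case: ifP; rewrite ?mulrNN mulr1.
by rewrite !mxE eq_sym nki mul0r.
Qed.

Lemma qf_signature_mx_delta n p (i : 'I_n) :
  qf (signature_mx R n p) (delta_mx i 0) = if (i < p)%N then 1 else -1.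
Proof. by rewrite qfE bf_delta mxE eqxx. Qed.

Lemma block_signature_mx_pos n p :
  block_mx 1%:M 0 0 (signature_mx R n p) = signature_mx R (1 + n) p.+1.
Proof.
apply/matrixP => i j; rewrite [RHS]mxE.
case: (split_ordP i) => i' ->; case: (split_ordP j) => j' ->;
  rewrite ?(block_mxEul, block_mxEur, block_mxEdl, block_mxEdr) !mxE ?eq_shift //=.
by rewrite !ord1.
Qed.

Lemma block_signature_mx_neg n :
  block_mx (-1)%:M 0 0 (signature_mx R n 0) = signature_mx R (1 + n) 0.
Proof.
apply/matrixP => i j; rewrite [RHS]mxE.
case: (split_ordP i) => i' ->; case: (split_ordP j) => j' ->;
  rewrite ?(block_mxEul, block_mxEur, block_mxEdl, block_mxEdr) !mxE ?eq_shift //=.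
by rewrite !ord1.
Qed.

Lemma bf_signature_sqr_le n p (x y : 'cV[R]_n) :
  bf (signature_mx R n p) x y ^+ 2 <= qf 1%:M x * qf 1%:M y.
Proof.
have -> : bf (signature_mx R n p) x y = bf 1%:M (signature_mx R n p *m x) y.
  by rewrite /bf trmx_mul tr_signature_mx mulmx1.
have -> : qf 1%:M x = qf 1%:M (signature_mx R n p *m x).
  by rewrite !qfE bf_mulmx tr_signature_mx mulmx1 signature_mxK.
exact: bf1_sqr_le.
Qed.

End Signature.

Lemma signature_mx_nonpos {R : realType} {n p} {M P : 'M[R]_n} :
  (forall x, qf M x <= 0) -> P^T *m M *m P = signature_mx R n p ->
  signature_mx R n p = signature_mx R n 0.
Proof.
move=> Mle0 MP; apply/matrixP => i j; rewrite !mxE; case: eqP => // _.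
case: ifP => // ip; have := Mle0 (P *m delta_mx i 0).
by rewrite qfE bf_mulmx MP -qfE qf_signature_mx_delta ip ler10.
Qed.

Section PositiveForms.
Context {R : realType} {n : nat}.
Implicit Types (L Q P : 'M[R]_n) (x y : 'cV[R]_n).

Definition ortho_form P : 'M[R]_n := (invmx P)^T *m invmx P.

Lemma qf_ortho_form P x : P \in unitmx -> qf (ortho_form P) (P *m x) = qf 1%:M x.
Proof.
move=> uP; rewrite !qfE bf_mulmx /ortho_form mulmxA -trmx_mul -mulmxA mulVmx //.
by rewrite trmx1 mul1mx.
Qed.

Lemma pos_def_ortho_form P : P \in unitmx -> pos_def (ortho_form P).
Proof.
move=> uP; split; first by rewrite /Defs.symmetric_form /ortho_form trmx_mul trmxK.
move=> x x0; rewrite -(mulKVmx uP x) qf_ortho_form //; apply: qf1_gt0.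
by apply: contraNneq x0 => x0; rewrite -(mulKVmx uP x) x0 mulmx0.
Qed.

Lemma Ps_ortho_form L P p :
  P \in unitmx -> P^T *m L *m P = signature_mx R n p -> Ps L (ortho_form P).
Proof.
move=> uP LP; split; first exact: pos_def_ortho_form.
exists p, P; split; rewrite // /ortho_form mulmxA -trmx_mul mulVmx //.
by rewrite trmx1 mul1mx mulVmx.
Qed.

Lemma pos_def_qf_ge0 Q x : pos_def Q -> 0 <= qf Q x.
Proof.
by move=> [_ Qpos]; have [->|/Qpos/ltW //] := eqVneq x 0; rewrite qf0.
Qed.

Lemma Ps_bf_sqr_le {L Q} x y : Ps L Q -> bf L x y ^+ 2 <= qf Q x * qf Q y.
Proof.
move=> [_ [p [P [uP [QP LP]]]]].
rewrite -[x](mulKVmx uP) -[y](mulKVmx uP).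
move: (invmx P *m x) (invmx P *m y) => X Y.
rewrite !qfE !bf_mulmx QP LP.
exact: bf_signature_sqr_le.
Qed.

End PositiveForms.

Section Congruence.
Context {R : realType} {n : nat}.

Lemma unitmx_block1 (P : 'M[R]_n) :
  P \in unitmx -> block_mx (1%:M : 'M[R]_1) 0 0 P \in unitmx.
Proof. by rewrite !unitmxE det_ublock det1 mul1r. Qed.

Lemma congr_block1 (c : R) (M P : 'M[R]_n) :
  (block_mx 1%:M 0 0 P)^T *m block_mx (c%:M : 'M_1) 0 0 M *m block_mx 1%:M 0 0 P
  = block_mx c%:M 0 0 (P^T *m M *m P).
Proof.
rewrite tr_block_mx !trmx1 !trmx0 !mulmx_block.
by rewrite !mul1mx !mul0mx !mulmx0 !mulmx1 !addr0 !add0r mul0mx.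
Qed.

Lemma mul_block1_col (P : 'M[R]_n) (a : 'cV[R]_1) (b : 'cV[R]_n) :
  block_mx 1%:M 0 0 P *m col_mx a b = col_mx a (P *m b).
Proof. by rewrite mul_block_col !mul1mx !mul0mx addr0 add0r. Qed.

Lemma congr_sym {m k} (P : 'M[R]_(m, k)) {A : 'M[R]_m} :
  A^T = A -> (P^T *m A *m P)^T = P^T *m A *m P.
Proof. by move=> sA; rewrite !trmx_mul trmxK sA mulmxA. Qed.

Lemma congr_mulmx m (M : 'M[R]_m) (P B : 'M[R]_m) :
  (P *m B)^T *m M *m (P *m B) = B^T *m (P^T *m M *m P) *m B.
Proof. by rewrite trmx_mul !mulmxA. Qed.

End Congruence.

Section Splitting.
Context {R : realType} {n : nat}.
Local Notation e0 := (col_mx (1%:M : 'cV[R]_1) (0 : 'cV[R]_n)).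

Lemma qf_e0 (A : 'M[R]_(1 + n)) : qf A e0 = ulsubmx A 0 0.
Proof.
rewrite /qf -[A in LHS]submxK tr_col_mx trmx1 trmx0 mul_row_block.
by rewrite !mul1mx !mul0mx !addr0 mul_row_col mulmx1 mulmx0 addr0.
Qed.

Lemma qf1_e0 : qf 1%:M e0 = 1.
Proof. by rewrite (qf1_col 1 n) qf1_1 qf0 addr0. Qed.

Lemma exists_unitmx_e0 (z : 'cV[R]_(1 + n)) : z != 0 ->
  exists2 P : 'M[R]_(1 + n), P \in unitmx & P *m e0 = z.
Proof.
move=> z0; have [k zk] : exists k, z k 0 != 0.
  apply/existsP; apply: contraNT z0 => /existsPn z_eq0; apply/eqP/matrixP => i j.
  by rewrite ord1 mxE; apply/eqP; have := z_eq0 i; rewrite negbK.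
pose s : 'S_(1 + n) := tperm ord0 k.
pose z' := perm_mx s *m z.
have z'0 : z' ord0 0 = z k 0 by rewrite /z' -row_permE mxE tpermL.
pose S := block_mx (usubmx z') (0 : 'M_(1, n)) (dsubmx z') 1%:M.
exists (perm_mx s^-1 *m S).
  rewrite unitmx_mul unitmx_perm /= unitmxE det_lblock det1 mulr1 det_mx11.
  rewrite unitfE mxE; have -> : lshift n (0 : 'I_1) = ord0 by apply: val_inj.
  by rewrite z'0.
rewrite -mulmxA mul_block_col !mulmx1 !mulmx0 !addr0 vsubmxK /z' mulmxA.
by rewrite -perm_mxM mulVg perm_mx1 mul1mx.
Qed.

(* [E] clears the first row and column; [A'] is the Schur complement of [c]. *)
Lemma exists_congr_block {A : 'M[R]_(1 + n)} {c} :
  A^T = A -> ulsubmx A = c%:M -> c != 0 ->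
  exists2 E : 'M[R]_(1 + n), E \in unitmx /\ E *m e0 = e0 &
    exists A' : 'M[R]_n, E^T *m A *m E = block_mx c%:M 0 0 A'.
Proof.
move=> sA Ac c0.
have Adl : dlsubmx A = (ursubmx A)^T.
  by rewrite -[in LHS]sA -[A in LHS]submxK tr_block_mx block_mxKdl.
set b := ursubmx A in Adl.
pose E : 'M[R]_(1 + n) := block_mx 1%:M (- c^-1 *: b) 0 1%:M.
exists E.
  split; first by rewrite unitmxE det_ublock !det1 mulr1 unitr1.
  by rewrite /E mul_block_col !mul1mx !mulmx0 mul0mx !addr0.
exists (drsubmx A - c^-1 *: (b^T *m b)).
rewrite /E -[A in LHS]submxK Ac Adl tr_block_mx !trmx1 trmx0 !mulmx_block.
have cb : c%:M *m (- c^-1 *: b) + b = 0.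
  by rewrite mul_scalar_mx scalerA mulrN mulfV // scaleN1r addNr.
have bc : (- c^-1 *: b)^T *m c%:M + b^T = 0.
  by rewrite mul_mx_scalar linearZ /= scalerA mulrN mulfV // scaleN1r addNr.
rewrite -/b !mul1mx !mul0mx !mulmx1 !mulmx0 !addr0 cb bc mul0mx add0r.
by rewrite linearZ /= -scalemxAl addrC scaleNr.
Qed.

Lemma block_scalar_mx_sym (c : R) (A' : 'M[R]_n) :
  (block_mx (c%:M : 'M_1) 0 0 A')^T = block_mx c%:M 0 0 A' -> A'^T = A'.
Proof. by rewrite tr_block_mx => /eq_block_mx[_ _ _]. Qed.

Lemma split_anisotropic {M : 'M[R]_(1 + n)} {z c} :
  M^T = M -> \det M != 0 -> qf M z = c -> c != 0 ->
  exists P (M' : 'M[R]_n), [/\ P \in unitmx, P^T *m M *m P = block_mx c%:M 0 0 M',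
    P *m e0 = z, M'^T = M' & \det M' != 0].
Proof.
move=> sM dM Mz c0.
have [P0 uP0 P0z] : exists2 P0, P0 \in unitmx & P0 *m e0 = z.
  by apply: exists_unitmx_e0; apply: contraNneq c0 => z0; rewrite -Mz z0 qf0.
pose A := P0^T *m M *m P0.
have sA : A^T = A := congr_sym P0 sM.
have Ac : ulsubmx A = c%:M.
  by rewrite [LHS]mx11_scalar -qf_e0 qfE /A -bf_mulmx P0z -qfE Mz.
have [E [uE Ee0] [M' AE]] := exists_congr_block sA Ac c0.
have detMP : \det (block_mx (c%:M : 'M_1) 0 0 M') != 0.
  by rewrite -AE /A !det_mulmx !det_tr !mulf_neq0 // -unitfE -unitmxE.
exists (P0 *m E), M'; split.
- by rewrite unitmx_mul uP0.
- by rewrite trmx_mul -AE /A !mulmxA.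
- by rewrite -mulmxA Ee0.
- by apply: (block_scalar_mx_sym c); rewrite -AE congr_sym.
- by move: detMP; rewrite det_ublock det_scalar1 mulf_eq0 negb_or => /andP[].
Qed.

Lemma split_orthogonal {M : 'M[R]_(1 + n)} {P} {M' : 'M[R]_n} {c z y} :
  P \in unitmx -> P^T *m M *m P = block_mx c%:M 0 0 M' ->
  P *m e0 = z -> c != 0 -> bf M z y = 0 ->
  exists2 u, P *m col_mx 0 u = y & qf M' u = qf M y.
Proof.
move=> uP MP Pz c0 zy; pose u := invmx P *m y.
have Pu : P *m u = y := mulKVmx uP y.
have u0 : usubmx u = 0.
  have /eqP : c * usubmx u 0 0 = 0.
    rewrite -zy -Pz -Pu bf_mulmx MP -[u]vsubmxK bf_block bf0l addr0 vsubmxK.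
    by rewrite /bf trmx1 mul1mx mul_scalar_mx !mxE.
  rewrite mulf_eq0 (negbTE c0) /= => /eqP u00.
  by apply/matrixP => i j; rewrite !ord1 u00 mxE.
have Pdu : P *m col_mx 0 (dsubmx u) = y by rewrite -u0 vsubmxK.
by exists (dsubmx u); rewrite // -Pdu !qfE bf_mulmx MP bf_block bf0l add0r.
Qed.

End Splitting.

Section SylvesterFrame.
Context {R : realType} {n : nat}.
Local Notation e0 := (col_mx (1%:M : 'cV[R]_1) (0 : 'cV[R]_n)).

(* The case [y = 0] is the bare existence of a Sylvester basis, which the
   induction needs. The coordinate vector [Y] is 0 or a standard basis vector;
   only [qf 1%:M Y <= 1] is recorded. *)
Hypothesis frame_neg : forall {M : 'M[R]_n} {y}, M^T = M -> \det M != 0 ->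
  y = 0 \/ qf M y = -1 ->
  exists p P Y, [/\ P \in unitmx, P^T *m M *m P = signature_mx R n p, P *m Y = y
                  & qf 1%:M Y <= 1].

Variable M : 'M[R]_(1 + n).
Hypotheses (sM : M^T = M) (dM : \det M != 0).

Lemma sylvester_frame_pos {z y} :
  qf M z = 1 -> y = 0 \/ qf M y = -1 -> bf M z y = 0 ->
  exists p P Y, [/\ P \in unitmx, P^T *m M *m P = signature_mx R (1 + n) p,
                   P *m e0 = z, P *m col_mx 0 Y = y & qf 1%:M Y <= 1].
Proof.
move=> Mz y01 zy.
have [P1 [M' [uP1 MP1 P1z sM' dM']]] := split_anisotropic sM dM Mz (oner_neq0 R).
have [u P1u M'u] := split_orthogonal uP1 MP1 P1z (oner_neq0 R) zy.
have u01 : u = 0 \/ qf M' u = -1.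
  case: y01 => [y0|My]; last by right; rewrite M'u.
  left; have := congr1 (mulmx (invmx P1)) P1u.
  by rewrite mulKmx // y0 mulmx0 -col_mx0 => /eq_col_mx[].
have [p [P' [Y [uP' MP' P'Y Y1]]]] := frame_neg sM' dM' u01.
exists p.+1, (P1 *m block_mx 1%:M 0 0 P'), Y; split => //.
- by rewrite unitmx_mul uP1 unitmx_block1.
- by rewrite congr_mulmx MP1 congr_block1 MP' block_signature_mx_pos.
- by rewrite -mulmxA mul_block1_col mulmx0.
- by rewrite -mulmxA mul_block1_col P'Y.
Qed.

Lemma sylvester_frame_nonpos {z} : (forall x, qf M x <= 0) -> qf M z = -1 ->
  exists2 P, P \in unitmx /\ P^T *m M *m P = signature_mx R (1 + n) 0 & P *m e0 = z.
Proof.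
move=> Mle0 Mz; have N10 : (-1 : R) != 0 by rewrite oppr_eq0 oner_eq0.
have [P1 [M' [uP1 MP1 P1z sM' dM']]] := split_anisotropic sM dM Mz N10.
have [p [P' [Y [uP' MP' _ _]]]] := frame_neg sM' dM' (or_introl erefl).
have M'le0 x : qf M' x <= 0.
  by have := Mle0 (P1 *m col_mx 0 x); rewrite qfE bf_mulmx MP1 bf_block bf0l add0r.
exists (P1 *m block_mx 1%:M 0 0 P'); last by rewrite -mulmxA mul_block1_col mulmx0.
split; first by rewrite unitmx_mul uP1 unitmx_block1.
rewrite congr_mulmx MP1 congr_block1 MP' (signature_mx_nonpos M'le0 MP').
exact: block_signature_mx_neg.
Qed.

Lemma sylvester_frame_neg_step y : y = 0 \/ qf M y = -1 ->
  exists p P Y, [/\ P \in unitmx, P^T *m M *m P = signature_mx R (1 + n) p, P *m Y = y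
                  & qf 1%:M Y <= 1].
Proof.
move=> y01; have [[x Mx]|Mpos] := pselect (exists x, 0 < qf M x).
  have [x'y Mx'] := orthogonalize_neg x sM y01.
  set x' := x + _ in x'y Mx'.
  have Mx'_gt0 : 0 < qf M x' by rewrite Mx'; have := sqr_ge0 (bf M x y); lra.
  set z := (Num.sqrt `|qf M x'|)^-1 *: x'.
  have Mz : qf M z = 1 by rewrite qf_normalize gtr0_sg.
  have zy : bf M z y = 0 by rewrite bfZl x'y mulr0.
  have [p [P [Y [uP MP _ PY Y1]]]] := sylvester_frame_pos Mz y01 zy.
  by exists p, P, (col_mx 0 Y); split; rewrite // qf1_col qf0 add0r.
have Mle0 x : qf M x <= 0 by rewrite leNgt; apply/negP => Mx; apply: Mpos; exists x.
case: y01 => [->|My].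
  have [x Mx] := exists_qf_neq0 sM dM.
  have Mx_lt0 : qf M x < 0 by rewrite lt_neqAle Mx Mle0.
  have Mz : qf M ((Num.sqrt `|qf M x|)^-1 *: x) = -1 by rewrite qf_normalize ltr0_sg.
  have [P [uP MP] _] := sylvester_frame_nonpos Mle0 Mz.
  by exists 0%N, P, 0; split; rewrite ?mulmx0 ?qf0 ?ler01.
have [P [uP MP] Pe0] := sylvester_frame_nonpos Mle0 My.
by exists 0%N, P, e0; split; rewrite // qf1_e0.
Qed.

End SylvesterFrame.

Lemma sylvester_frame_neg {R : realType} {n} {M : 'M[R]_n} {y} :
  M^T = M -> \det M != 0 -> y = 0 \/ qf M y = -1 ->
  exists p P Y, [/\ P \in unitmx, P^T *m M *m P = signature_mx R n p, P *m Y = y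
                  & qf 1%:M Y <= 1].
Proof.
elim: n M y => [|n IH] M y.
  by exists 0%N, 1%:M, 0; split; rewrite ?unitmx1 ?flatmx0 ?qf0 ?ler01.
by move=> sM dM; apply: sylvester_frame_neg_step.
Qed.

Lemma Ps_hyperbolic_pair {R : realType} s (L : 'M[R]_s) a b :
  nondeg_qf L -> qf L a = 0 -> qf L b = 0 -> bf L a b = 1 ->
  exists Q, [/\ Ps L Q, qf Q a <= 1 & qf Q b <= 1].
Proof.
case: s => [|s] in L a b *.
  by rewrite [a]flatmx0 bf0l => _ _ _ /eqP; rewrite eq_sym oner_eq0.
move=> [sL dL] La Lb Lab; have Lba : bf L b a = 1 by rewrite (bfC sL).
pose r : R := (Num.sqrt 2)^-1.
have r2 : r ^+ 2 = 2^-1 by rewrite exprVn sqr_sqrtr ?ler0n.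
pose x := r *: (a + b); pose y := r *: (a - b).
have Lx : qf L x = 1.
  by rewrite qfZ qfD // La Lb Lab r2 mulr1 add0r addr0 mulVf ?pnatr_eq0.
have Ly : qf L y = -1.
  by rewrite qfZ qfD // qfN bfNr La Lb Lab r2 mulrN1 add0r addr0 mulrN mulVf ?pnatr_eq0.
have Lxy : bf L x y = 0.
  by rewrite bfZl bfZr !bfDl !bfDr !bfNr -!qfE La Lb Lab Lba; ring.
have [p [P [Y [uP LP Px Py Y1]]]] :=
  sylvester_frame_pos (@sylvester_frame_neg R s) L sL dL Lx (or_intror Ly) Lxy.
have half u : 2^-1 *: (u + u) = u :> 'cV[R]_s.+1.
  by rewrite -mulr2n -scaler_nat scalerA mulVf ?pnatr_eq0 // scale1r.
have xy2 : r *: (x + y) = a /\ r *: (x - y) = b.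
  split; rewrite /x /y -?scalerDr -?scalerBr scalerA -expr2 r2 -[RHS]half.
    by rewrite addrACA subrr addr0.
  by rewrite opprB addrC addrA subrK.
exists (ortho_form P); split; first exact: Ps_ortho_form uP LP.
- rewrite -xy2.1 -Px -Py -mulmxDr add_col_mx addr0 add0r qfZ qf_ortho_form //.
  by rewrite (qf1_col 1 s) qf1_1 r2; lra.
- rewrite -xy2.2 -Px -Py -mulmxBr opp_col_mx add_col_mx oppr0 addr0 add0r.
  by rewrite qfZ qf_ortho_form // (qf1_col 1 s) qf1_1 qfN r2; lra.
Qed.

Theorem lemma3p14 (R : realType) (s : nat) (L : 'M[R]_s)
  (v w : 'cV[R]_s) :
  nondeg_qf L -> v \in Con L -> w \in Con L -> bf L v w != 0 ->
  ereal_inf [set ((Num.sqrt 2 * ln (qf Q v))%:E)%E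
              | Q in [set Q | Ps L Q /\ qf Q w <= 1]]
  = ((2 * Num.sqrt 2 * ln `|bf L v w|)%:E)%E.
Proof.
move=> ndL; rewrite !in_setE /Con /= => Lv Lw; set B := bf L v w => B0.
have B2_gt0 : 0 < B ^+ 2 by rewrite lt_def sqrf_eq0 B0 sqr_ge0.
have B2_le Q : Ps L Q -> qf Q w <= 1 -> B ^+ 2 <= qf Q v.
  move=> PQ Qw; apply: le_trans (Ps_bf_sqr_le v w PQ) _.
  by rewrite ler_piMr ?pos_def_qf_ge0 //; case: PQ.
have [Q0 [PQ0 Q0v Q0w]] :
    exists Q, [/\ Ps L Q, qf Q (B^-1 *: v) <= 1 & qf Q w <= 1].
  by apply: Ps_hyperbolic_pair; rewrite ?qfZ ?Lv ?mulr0 ?bfZl ?mulVf.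
have Q0vE : qf Q0 v = B ^+ 2.
  apply/le_anti; rewrite B2_le // andbT -[v in qf Q0 v](scalerKV B0) qfZ.
  by rewrite ler_piMr ?sqr_ge0.
have lnE : 2 * Num.sqrt 2 * ln `|B| = Num.sqrt 2 * ln (B ^+ 2).
  by rewrite -real_normK ?num_real // lnXn ?normr_gt0 // mulr2n; ring.
apply/le_anti/andP; split.
  by apply: ereal_inf_lbound; exists Q0 => //; rewrite Q0vE lnE.
apply/ereal_infP => _ [Q [PQ Qw] <-]; rewrite lee_fin lnE ler_wpM2l ?sqrtr_ge0 //.
by rewrite ler_ln ?posrE ?B2_le // (lt_le_trans B2_gt0) ?B2_le.
Qed.
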